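(* Let $R$ be a ring and $M$ an $R$-bimodule. The map $\mathrm{tlog}:\widehat S(R;M)\to\prod_{n\ge1}(M^{\circledcirc_R n})^{C_n}$ descends to a continuous group homomorphism $\mathrm{tlog}:W(R;M)\to\prod_{n\ge1}(M^{\circledcirc_R n})^{C_n}$ (the ghost map). If all norm maps $(M^{\circledcirc_R n})_{C_n}\to(M^{\circledcirc_R n})^{C_n}$, $x\mapsto\sum_{g\in C_n}gx$, are injective (e.g. if all $(M^{\circledcirc_R n})_{C_n}$ are torsion free), then the ghost map on $W(R;M)$ is injective and in fact a homeomorphism onto its image (with the product topology on the target).
   Context: All rings are unital and associative but not necessarily commutative. For a ring $R$ and $R$-bimodule $M$, $M^{\otimes_R n}$ is the $n$-fold tensor power over $R$ ($M^{\otimes_R0}=R$), $M^{\circledcirc_R n}:=M^{\otimes_R n}/[R,M^{\otimes_R n}]$ ($[R,X]$ the additive subgroup generated by $rx-xr$), with $C_n$ acting by cyclic rotation of tensor factors. $\widehat T(R;M)=\prod_{n\ge0}M^{\otimes_R n}$ (elements $\sum a_nt^n$), product topology; $\widehat S(R;M)$ its group of elements with constant term $1$, topologized by the subgroups of elements $1+a_nt^n+\cdots$. $W(R;M)$ is the quotient of $\widehat S(R;M)$ by the closure of the normal subgroup generated by all commutators and all $(1-rmt)(1-mrt)^{-1}$, $r\in R$, $m\in M$. For a $C_N$-module $X$ and $H\le C_N$, $\mathrm{tr}_H^{C_N}(x)=\sum_{g\in C_N/H}gx$; for $a\in M^{\otimes_Rn}$, $a^k\in M^{\otimes_R kn}$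 is its $k$-fold tensor power. $\mathrm{tlog}:\widehat S(R;M)\to\prod_{n\ge1}(M^{\circledcirc_R n})^{C_n}$ is the unique continuous group homomorphism, natural in $(R;M)$, with $\mathrm{tlog}(1-at^n)=\sum_{k\ge1}\mathrm{tr}^{C_{kn}}_{C_k}(a^k)t^{kn}$ for $a\in M^{\otimes_Rn}$ (rationally it equals $-\mathrm{tr}\circ\log$, $\log(1+f)=\sum_{j\ge1}(-1)^{j+1}f^j/j$ followed by projection to cyclic coinvariants and the norm). *)

From HB Require Import structures.
From mathcomp Require Import all_boot all_order all_algebra.
Set Implicit Arguments.
Unset Strict Implicit.
Unset Printing Implicit Defensive.
Import GRing.Theory.
Local Open Scope ring_scope.

Definition bimodule_axioms (R : pzRingType) (M : zmodType)
    (lact : R -> M -> M) (ract : M -> R -> M) : Prop :=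
  (forall r m1 m2, lact r (m1 + m2) = lact r m1 + lact r m2) /\
  (forall r1 r2 m, lact (r1 + r2) m = lact r1 m + lact r2 m) /\
  (forall r1 r2 m, lact (r1 * r2) m = lact r1 (lact r2 m)) /\
  (forall m, lact 1 m = m) /\
  (forall r m1 m2, ract (m1 + m2) r = ract m1 r + ract m2 r) /\
  (forall r1 r2 m, ract m (r1 + r2) = ract m r1 + ract m r2) /\
  (forall r1 r2 m, ract m (r1 * r2) = ract (ract m r1) r2) /\
  (forall m, ract m 1 = m) /\
  (forall r s m, ract (lact r m) s = lact r (ract m s)).

(* The tensor algebra T_R(M) = (+)_n M^{(x)_R n}, characterised by its       *)
(* universal property: (T, j0, j1) is the initial ring under R receiving a   *)
(* bimodule map from M.  The graded pieces M^{(x)_R n} are recovered below   *)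
(* as the additive subgroups [Deg n] of T.                                   *)
Definition tensor_algebra (R : pzRingType) (M : zmodType)
    (lact : R -> M -> M) (ract : M -> R -> M)
    (T : pzRingType) (j0 : R -> T) (j1 : M -> T) : Prop :=
  [/\ (j0 1 = 1 /\ forall r s, j0 (r + s) = j0 r + j0 s /\ j0 (r * s) = j0 r * j0 s),
      (forall m1 m2, j1 (m1 + m2) = j1 m1 + j1 m2),
      (forall r m, j1 (lact r m) = j0 r * j1 m),
      (forall r m, j1 (ract m r) = j1 m * j0 r) &
      (forall (B : pzRingType) (phi : R -> B) (psi : M -> B),
         phi 1 = 1 ->
         (forall r s, phi (r + s) = phi r + phi s /\ phi (r * s) = phi r * phi s) ->
         (forall m1 m2, psi (m1 + m2) = psi m1 + psi m2) ->
         (forall r m, psi (lact r m) = phi r * psi m) ->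
         (forall r m, psi (ract m r) = psi m * phi r) ->
         (exists h : T -> B,
            [/\ h 1 = 1,
                (forall x y, h (x + y) = h x + h y /\ h (x * y) = h x * h y),
                (forall r, h (j0 r) = phi r) &
                (forall m, h (j1 m) = psi m)]) /\
         (forall h1 h2 : T -> B,
            (forall x y, h1 (x + y) = h1 x + h1 y /\ h1 (x * y) = h1 x * h1 y) ->
            (forall x y, h2 (x + y) = h2 x + h2 y /\ h2 (x * y) = h2 x * h2 y) ->
            h1 1 = 1 -> h2 1 = 1 ->
            (forall r, h1 (j0 r) = h2 (j0 r)) -> (forall m, h1 (j1 m) = h2 (j1 m)) ->
            forall x, h1 x = h2 x))].

Inductive span (V : zmodType) (G : V -> Prop) : V -> Prop :=
  | span0 : span G 0
  | spanG x : G x -> span G x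
  | spanB x y : span G x -> span G y -> span G (x - y).

Section Tensor.
Variables (R : pzRingType) (M : zmodType) (T : pzRingType) (j0 : R -> T) (j1 : M -> T).

(* M^{(x)_R n} inside T: spanned by  r m_1 (x) ... (x) m_n  (for n = 0: R). *)
Definition Deg (n : nat) : T -> Prop :=
  span (fun y => exists (r : R) (ms : 'I_n -> M), y = j0 r * \prod_(i < n) j1 (ms i)).

(* [R, M^{(x)_R n}]; x and y represent the same element of the cyclic
   coinvariants M^{(o)_R n} iff  Comm n (x - y). *)
Definition Comm (n : nat) : T -> Prop :=
  span (fun y => exists (r : R) (x : T), Deg n x /\ y = j0 r * x - x * j0 r).

(* Rot n x y : y represents the image of x under the generator of C_n acting
   on M^{(o)_R n} by cyclic rotation of the tensor factors
   (m (x) w  |->  w (x) m,  m in M, w in M^{(x)(n-1)}). *)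
Definition Rot (n : nat) (x y : T) : Prop :=
  exists s : seq (M * T),
    [/\ (forall p, p \in s -> Deg n.-1 p.2),
        x = \sum_(p <- s) j1 p.1 * p.2 &
        Comm n (y - \sum_(p <- s) p.2 * j1 p.1)].

(* RotIter n i x y : y represents g^i x, g the generator of C_n. *)
Fixpoint RotIter (n i : nat) (x y : T) : Prop :=
  match i with
  | 0 => Comm n (y - x)
  | i'.+1 => exists z, Rot n x z /\ RotIter n i' z y
  end.

(* TrRel n k a y : y represents tr_{C_k}^{C_{kn}}(a^k) in M^{(o)_R kn}; the
   cosets C_{kn}/C_k are represented by g^i, i < n. *)
Definition TrRel (n k : nat) (a y : T) : Prop :=
  exists ys : nat -> T,
    (forall i, (i < n)%N -> RotIter (k * n) i (a ^+ k) (ys i)) /\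
    Comm (k * n) (y - \sum_(i < n) ys i).

(* Kernel of the coinvariants M^{(o)n} -> (M^{(o)n})_{C_n}:
   Comm n together with all  x - g x. *)
Definition CycSub (n : nat) : T -> Prop :=
  span (fun y => Comm n y \/ exists x z, Deg n x /\ Rot n x z /\ y = x - z).

(* The norm map (M^{(o)n})_{C_n} -> (M^{(o)n})^{C_n} is injective. *)
Definition norm_injective (n : nat) : Prop :=
  forall x (ys : nat -> T), Deg n x ->
    (forall i, (i < n)%N -> RotIter n i x (ys i)) ->
    Comm n (\sum_(i < n) ys i) -> CycSub n x.

(* elements are sequences f with f n in Deg n (f n = coefficient of t^n). *)
Definition mulS (f g : nat -> T) : nat -> T :=
  fun n => \sum_(i < n.+1) f i * g (n - i)%N.

Definition oneS : nat -> T := fun n => if n == 0%N then 1 else 0.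

Definition InS (f : nat -> T) : Prop := f 0%N = 1 /\ forall n, Deg n (f n).

Definition one_minus (n : nat) (a : T) : nat -> T :=
  fun m => if m == 0%N then 1 else if m == n then - a else 0.

(* Generators: commutators, and (1 - rm t)(1 - mr t)^{-1}. *)
Definition Wgen (lact : R -> M -> M) (ract : M -> R -> M) (f : nat -> T) : Prop :=
  (exists x x' y y', InS x' /\ InS y' /\ [/\ InS x, InS y,
      (forall n, mulS x x' n = oneS n), (forall n, mulS y y' n = oneS n) &
      (forall n, f n = mulS (mulS (mulS x y) x') y' n)]) \/
  (exists r m u, [/\ InS u,
      (forall n, mulS u (one_minus 1 (j1 (ract m r))) n = oneS n) &
      (forall n, f n = mulS (one_minus 1 (j1 (lact r m))) u n)]).

Inductive NormGen (lact : R -> M -> M) (ract : M -> R -> M) : (nat -> T) -> Prop :=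
  | ng_gen f : InS f -> Wgen lact ract f -> NormGen lact ract f
  | ng_one : NormGen lact ract oneS
  | ng_ext f g : NormGen lact ract f -> (forall n, f n = g n) -> NormGen lact ract g
  | ng_mul f g : NormGen lact ract f -> NormGen lact ract g ->
                 NormGen lact ract (mulS f g)
  | ng_inv f g : NormGen lact ract f -> InS g -> (forall n, mulS f g n = oneS n) ->
                 NormGen lact ract g
  | ng_conj f g h : NormGen lact ract f -> InS g -> InS h ->
                 (forall n, mulS g h n = oneS n) ->
                 NormGen lact ract (mulS (mulS g f) h).

(* Its closure in \hat S(R;M); the subgroups U_n = 1 + t^n(...) form a basis
   of neighbourhoods of 1.  W(R;M) = \hat S(R;M) / WClos. *)
Definition WClos (lact : R -> M -> M) (ract : M -> R -> M) (f : nat -> T) : Prop :=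
  InS f /\ forall n, exists g, NormGen lact ract g /\
                           forall k, (k < n)%N -> f k = g k.

(* tlog : \hat S(R;M) -> prod_{n>=1} (M^{(o)n})^{C_n}, a value being represented
   by a sequence c with c n in Deg n, taken modulo Comm n.  Characterising
   properties: continuous group homomorphism with the prescribed values on
   1 - a t^n (this determines it uniquely). *)
Definition is_tlog (tlog : (nat -> T) -> nat -> T) : Prop :=
  [/\ (forall f n, InS f -> Deg n (tlog f n)),
      (forall f g n, InS f -> InS g -> (0 < n)%N ->
          Comm n (tlog (mulS f g) n - (tlog f n + tlog g n))),
      (forall m, exists n, forall f, InS f ->
          (forall k, (0 < k < n)%N -> f k = 0) ->
          forall k, (0 < k < m)%N -> Comm k (tlog f k)) &
      (forall n a m, (0 < n)%N -> Deg n a -> (0 < m)%N ->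
          if (n %| m)%N then TrRel n (m %/ n) a (tlog (one_minus n a) m)
          else Comm m (tlog (one_minus n a) m))].

End Tensor.

(* Modulo cyclic coinvariants, tlog is a continuous homomorphism.  It kills
   commutators by additivity, and (1 - rmt)(1 - mrt)^-1 because (rm)^k and (mr)^k
   differ by an element of [R, M^(x)k]; by continuity it kills the closure WClos,
   so it descends to W(R;M).

   Conversely, let tlog h vanish in degrees < N.  Peel h off degree by degree:
   if h = 1 mod t^n, then h = (1 - at^n) h' with h' = 1 mod t^(n+1).  In degree n
   neither h' nor any factor 1 - bt^j with j > n contributes, so the degree-n
   ghost component is the norm of a, and injectivity of the norm puts a in the
   kernel of the projection to (M^(o)n)_{C_n}.  Every such a is the leading
   coefficient of an element of the normal subgroup: the commutator of 1 - xt^i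
   and 1 - yt^j starts with 1 - (yx - xy)t^(i+j), which yields both [R, M^(x)n]
   and the rotation relations m w - w m.  Hence h agrees to order N with an
   element of the normal subgroup; this gives injectivity on W, and, since only
   the ghost components of degree < N were used, continuity of the inverse. *)

From Pilot Require Import Defs.
From mathcomp Require Import all_boot all_order all_algebra zify.
From Stdlib Require Import FunctionalExtensionality.
Import GRing.Theory.
Local Open Scope ring_scope.
Set Implicit Arguments.
Unset Strict Implicit.

Section Span.
Variables (V : zmodType) (G : V -> Prop).

Lemma span_opp x : Defs.span G x -> Defs.span G (- x).
Proof. by move=> hx; rewrite -sub0r; apply: spanB => //; apply: span0. Qed.

Lemma span_add x y : Defs.span G x -> Defs.span G y -> Defs.span G (x + y).
Proof. by move=> hx hy; rewrite -[y]opprK; apply: spanB => //; apply: span_opp. Qed.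

Lemma span_sum (I : Type) (s : seq I) (F : I -> V) :
  (forall i, Defs.span G (F i)) -> Defs.span G (\sum_(i <- s) F i).
Proof.
move=> hF; elim: s => [|i s IH]; first by rewrite big_nil; apply: span0.
by rewrite big_cons; apply: span_add.
Qed.

Lemma span_subr_trans x y z :
  Defs.span G (x - y) -> Defs.span G (y - z) -> Defs.span G (x - z).
Proof. by move=> hxy hyz; rewrite -(subrK y x) -addrA; apply: span_add. Qed.

Lemma span_subrD x x' y y' :
  Defs.span G (x - x') -> Defs.span G (y - y') -> Defs.span G (x + y - (x' + y')).
Proof. by move=> hx hy; rewrite opprD addrACA; apply: span_add. Qed.

Lemma span_subrr x : Defs.span G (x - x).
Proof. by rewrite subrr; apply: span0. Qed.

Lemma span_subr_cancel x y : Defs.span G x -> Defs.span G (x - y) -> Defs.span G y.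
Proof. by move=> hx hxy; rewrite -(subKr x y); apply: spanB. Qed.

End Span.

Lemma span_map (V W : zmodType) (G : V -> Prop) (H : W -> Prop) (phi : V -> W) :
  (forall x y, phi (x - y) = phi x - phi y) ->
  (forall x, G x -> Defs.span H (phi x)) -> forall x, Defs.span G x -> Defs.span H (phi x).
Proof.
move=> phiB hG; have phi0 : phi 0 = 0 by rewrite -(subrr 0) phiB subrr.
move=> x; elim=> [|y /hG //|y z _ hy _ hz]; first by rewrite phi0; apply: span0.
by rewrite phiB; apply: spanB.
Qed.

Section PowerSeries.
Variable T : pzRingType.
Implicit Types f g h : nat -> T.
Local Notation one := (oneS T).

Definition agree n f g := forall k, (k < n)%N -> f k = g k.

Lemma mulSA f g h : mulS (mulS f g) h = mulS f (mulS g h).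
Proof.
apply: functional_extensionality => n; rewrite /mulS.
have -> : \sum_(i < n.+1) (\sum_(j < i.+1) f j * g (i - j)%N) * h (n - i)%N =
   \sum_(j < n.+1) \sum_(i < n.+1)
     (if (j <= i)%N then f j * g (i - j)%N * h (n - i)%N else 0).
  rewrite exchange_big; apply: eq_bigr => i _; rewrite mulr_suml.
  rewrite (big_ord_widen n.+1 (fun j => f j * g (i - j)%N * h (n - i)%N)) ?ltn_ord //.
  by rewrite big_mkcond; apply: eq_bigr => j _; rewrite ltnS.
apply: eq_bigr => j _; rewrite mulr_sumr.
have jn : (j <= n)%N by rewrite -ltnS ltn_ord.
rewrite -(big_mkcond (fun i : 'I_n.+1 => (j <= i)%N)) /=.
rewrite -(big_mkord (fun i => (j <= i)%N) (fun i => f j * g (i - j)%N * h (n - i)%N)).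
rewrite (_ : \sum_(0 <= i < n.+1 | (j <= i)%N) f j * g (i - j)%N * h (n - i)%N =
   \sum_(j <= i < n.+1) f j * g (i - j)%N * h (n - i)%N); last first.
  by rewrite (big_nat_widenl _ _ _ _ _ (leq0n j)).
rewrite (big_addn 0 n.+1 j) big_mkord subSn //.
apply: eq_bigr => k _; rewrite addnK mulrA; congr (_ * _ * h _).
by rewrite addnC subnDA.
Qed.

Lemma mul1S f : mulS one f = f.
Proof.
apply: functional_extensionality => n; rewrite /mulS big_ord_recl /= mul1r subn0.
by rewrite big1 ?addr0 // => i _; rewrite mul0r.
Qed.

Lemma mulS1 f : mulS f one = f.
Proof.
apply: functional_extensionality => n; rewrite /mulS big_ord_recr /= subnn mulr1.
rewrite big1 ?add0r // => i _; rewrite /oneS.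
rewrite (_ : (n - i == 0)%N = false) ?mulr0 //.
by apply/negbTE; rewrite subn_eq0 -ltnNge ltn_ord.
Qed.

Lemma mulS0 f g : mulS f g 0%N = f 0%N * g 0%N.
Proof. by rewrite /mulS big_ord1. Qed.

Lemma agree_sym n f g : agree n f g -> agree n g f.
Proof. by move=> e k hk; rewrite e. Qed.

Lemma agree_trans n f g h : agree n f g -> agree n g h -> agree n f h.
Proof. by move=> e1 e2 k hk; rewrite e1 ?e2. Qed.

Lemma agree_le m n f g : (m <= n)%N -> agree n f g -> agree m f g.
Proof. by move=> mn e k hk; apply: e; apply: leq_trans mn. Qed.

Lemma agree_mulS n f f' g g' :
  agree n f f' -> agree n g g' -> agree n (mulS f g) (mulS f' g').
Proof.
move=> ef eg k hk; apply: eq_bigr => i _.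
have ik : (i <= k)%N by rewrite -ltnS ltn_ord.
by rewrite ef ?eg //; apply: leq_ltn_trans hk; rewrite ?leq_subr.
Qed.

Lemma agree_mul2l n f g g' : agree n g g' -> agree n (mulS f g) (mulS f g').
Proof. exact: agree_mulS. Qed.

(* Coefficients of degree <= n of the inverse of f; the higher ones are junk. *)
Fixpoint invS_upto f n : nat -> T :=
  if n is n'.+1 then fun k =>
    if (k <= n')%N then invS_upto f n' k
    else - \sum_(l < k) f l.+1 * invS_upto f n' (k - l.+1)%N
  else fun _ => 1.

Definition invS f : nat -> T := fun k => invS_upto f k k.

Lemma invS_uptoE f n k : (k <= n)%N -> invS_upto f n k = invS f k.
Proof.
elim: n k => [|n IH] k kn; first by move: kn; rewrite leqn0 => /eqP ->.
rewrite /=; case: ifP => [|kn']; first exact: IH.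
have -> : k = n.+1 by apply/eqP; rewrite eqn_leq kn ltnNge kn'.
by rewrite /invS /= ltnn.
Qed.

Lemma invS0 f : invS f 0%N = 1.
Proof. by []. Qed.

Lemma invSS f k : invS f k.+1 = - \sum_(l < k.+1) f l.+1 * invS f (k - l)%N.
Proof.
rewrite {1}/invS /= ltnn; congr (- _); apply: eq_bigr => l _.
by rewrite subSS invS_uptoE // leq_subr.
Qed.

Lemma mulS_invS f : f 0%N = 1 -> mulS f (invS f) = one.
Proof.
move=> f0; apply: functional_extensionality => -[|k]; first by rewrite mulS0 f0 mul1r.
rewrite /mulS big_ord_recl /= f0 mul1r subn0 invSS /oneS /=.
by rewrite (eq_bigr (fun l : 'I_k.+1 => f l.+1 * invS f (k - l)%N)) ?addNr.
Qed.

Lemma invS_mulS f : f 0%N = 1 -> mulS (invS f) f = one.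
Proof.
move=> f0; have invfK : invS (invS f) = f.
  by rewrite -[RHS]mulS1 -(mulS_invS (invS0 f)) -mulSA mulS_invS // mul1S.
by rewrite -{2}invfK mulS_invS.
Qed.

Lemma invS_unique f g : f 0%N = 1 -> mulS f g = one -> g = invS f.
Proof. by move=> f0 fg; rewrite -[g]mul1S -(invS_mulS f0) mulSA fg mulS1. Qed.

Lemma mulVKS f g : f 0%N = 1 -> mulS f (mulS (invS f) g) = g.
Proof. by move=> f0; rewrite -mulSA mulS_invS // mul1S. Qed.

Lemma agree_invS_mulS n f g : f 0%N = 1 -> agree n (mulS f g) one -> agree n (invS f) g.
Proof.
move=> f0 fg; rewrite -[g]mul1S -(invS_mulS f0) mulSA -{1}[invS f]mulS1.
by apply: agree_mulS => //; apply: agree_sym.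
Qed.

Lemma agree_invS n f f' :
  f 0%N = 1 -> f' 0%N = 1 -> agree n f f' -> agree n (invS f) (invS f').
Proof.
move=> f0 f'0 ff'; apply: agree_invS_mulS => //.
by rewrite -(mulS_invS f'0); apply: agree_mulS.
Qed.

Lemma agree_invS_mul n f g : f 0%N = 1 -> agree n f g -> agree n (mulS (invS f) g) one.
Proof. by move=> f0 fg; rewrite -(invS_mulS f0); apply: agree_mulS => //; apply: agree_sym. Qed.

End PowerSeries.

Ltac case_ifs :=
  repeat match goal with |- context [if ?b then _ else _] =>
    let e := fresh "e" in case e : b; try (exfalso; lia) end.

Section OneMinus.
Variable T : pzRingType.
Implicit Types (f g h : nat -> T) (a b x y : T).
Local Notation one := (oneS T).

Lemma sum_ord_pick n i (F : nat -> T) :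
  \sum_(l < n) (if l == i :> nat then F l else 0) = if (i < n)%N then F i else 0.
Proof.
elim: n => [|n IH]; first by rewrite big_ord0.
rewrite big_ord_recr /= IH; case: (ltngtP i n) => [lt|gt|->]; rewrite ?eqxx ?addr0 ?add0r.
- by rewrite ltnS ltnW.
- by rewrite ltnS leqNgt gt.
- by rewrite ltnSn.
Qed.

Lemma mulS_one_minusl i x g k : (0 < i)%N ->
  mulS (one_minus i x) g k = g k - (if (i <= k)%N then x * g (k - i)%N else 0).
Proof.
move=> i_gt0; rewrite /mulS big_ord_recl /= mul1r subn0; congr (_ + _).
rewrite (eq_bigr (fun l : 'I_k => if l == i.-1 :> nat then - (x * g (k - i)%N) else 0)).
  by rewrite (sum_ord_pick k i.-1 (fun=> - (x * g (k - i)%N))); case_ifs; rewrite ?oppr0.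
move=> l _; rewrite /one_minus /bump /= add1n; case_ifs; rewrite ?mul0r //.
by rewrite mulNr; congr (- (x * g _)); lia.
Qed.

Lemma mulS_one_minusr j y g k : (0 < j)%N ->
  mulS g (one_minus j y) k = g k - (if (j <= k)%N then g (k - j)%N * y else 0).
Proof.
move=> j_gt0; rewrite /mulS big_ord_recr /= /one_minus subnn eqxx mulr1 addrC; congr (_ + _).
rewrite (eq_bigr (fun l : 'I_k => if l == (k - j)%N :> nat then
     (if (j <= k)%N then - (g (k - j)%N * y) else 0) else 0)).
  rewrite (sum_ord_pick k (k - j) (fun=> if (j <= k)%N then - (g (k - j)%N * y) else 0)).
  by case_ifs; rewrite ?oppr0.
move=> l _; have lk := ltn_ord l; rewrite /one_minus; case_ifs; rewrite ?mulr0 //.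
by rewrite (eqP e1) mulrN.
Qed.

Lemma one_minus0 n : one_minus n 0 = one.
Proof. by apply: functional_extensionality => k; rewrite /one_minus /oneS oppr0; case_ifs. Qed.

Lemma one_minus_deg0 x : one_minus 0 x = one.
Proof. by apply: functional_extensionality => -[|k]. Qed.

Lemma one_minusD n a b :
  agree n.+1 (mulS (one_minus n a) (one_minus n b)) (one_minus n (a + b)).
Proof.
case: n => [|n]; first by rewrite !one_minus_deg0 mul1S.
move=> k kn; rewrite mulS_one_minusl // /one_minus; case_ifs; rewrite ?mulr0 ?subr0 //.
by rewrite mulr1 opprD addrC.
Qed.

Lemma invS_one_minus n b : agree n.+1 (invS (one_minus n b)) (one_minus n (- b)).
Proof. by apply: agree_invS_mulS => //; rewrite -(one_minus0 n) -(subrr b); apply: one_minusD. Qed.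

Lemma one_minus_lead n h : (0 < n)%N -> agree n h one ->
  agree n.+1 (one_minus n (- h n)) h.
Proof.
move=> n_gt0 h1 k kn; rewrite /one_minus opprK; case: eqP => [->|k_neq0]; first by rewrite h1.
by case: eqP => [-> //|k_neqn]; rewrite h1 /oneS; [case: eqP | lia].
Qed.

Lemma one_minus_commute i j x y : (0 < i)%N -> (0 < j)%N ->
  agree (i + j).+1 (mulS (one_minus i x) (one_minus j y))
     (mulS (mulS (one_minus j y) (one_minus i x)) (one_minus (i + j) (y * x - x * y))).
Proof.
move=> i_gt0 j_gt0 k kij.
rewrite mulS_one_minusl // mulS_one_minusr ?addn_gt0 ?i_gt0 // !mulS_one_minusl // /one_minus.
case_ifs; rewrite ?mulr0 ?mul0r ?subr0 ?sub0r ?mulr1 ?mul1r ?addr0 ?add0r ?mulrN ?mulNr ?opprK //.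
- by rewrite addrC.
- by rewrite opprB addrC subrK.
Qed.

End OneMinus.

Lemma exprS_mul_rot (T : pzRingType) (p q : T) k : (p * q) ^+ k.+1 = p * ((q * p) ^+ k * q).
Proof.
elim: k => [|k IH]; first by rewrite expr1 expr0 mul1r.
by rewrite exprSr IH exprSr !mulrA.
Qed.

Section Ghost.
Variables (R : pzRingType) (M : zmodType) (T : pzRingType) (j0 : R -> T) (j1 : M -> T).
Variables (lact : R -> M -> M) (ract : M -> R -> M).
Hypothesis j0_1 : j0 1 = 1.
Hypothesis j0_mul : forall r s, j0 (r * s) = j0 r * j0 s.
Hypothesis j1_lact : forall r m, j1 (lact r m) = j0 r * j1 m.
Hypothesis j1_ract : forall r m, j1 (ract m r) = j1 m * j0 r.
Variable tlog : (nat -> T) -> nat -> T.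
Hypothesis tlogP : is_tlog j0 j1 tlog.

Local Notation D := (Deg j0 j1).
Local Notation C := (Comm j0 j1).
Local Notation S := (InS j0 j1).
Local Notation NG := (NormGen j0 j1 lact ract).
Local Notation one := (oneS T).

Lemma Deg_gen n r (ms : 'I_n -> M) : D n (j0 r * \prod_(i < n) j1 (ms i)).
Proof. by apply: spanG; exists r, ms. Qed.

Lemma Deg_j0l n r y : D n y -> D n (j0 r * y).
Proof.
apply: (span_map (phi := fun y => j0 r * y)) => [x z|_ [r' [ms ->]]]; first by rewrite mulrBr.
by rewrite mulrA -j0_mul; apply: Deg_gen.
Qed.

Lemma Deg_j0r n r y : D n y -> D n (y * j0 r).
Proof.
apply: (span_map (phi := fun y => y * j0 r)) => [x z|_ [r' [ms ->]]]; first by rewrite mulrBl.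
case: n ms => [|n] ms.
  by rewrite big_ord0 mulr1 -j0_mul; have := Deg_gen (r' * r) ms; rewrite big_ord0 mulr1.
pose ms' i := if val i == n then ract (ms i) r else ms i.
have -> : j0 r' * \prod_(i < n.+1) j1 (ms i) * j0 r = j0 r' * \prod_(i < n.+1) j1 (ms' i).
  rewrite !big_ord_recr /= -!mulrA /ms' /= eqxx j1_ract; congr (_ * (_ * _)).
  by apply: eq_bigr => i _; rewrite /= (ltn_eqF (ltn_ord i)).
exact: Deg_gen.
Qed.

Lemma Deg_j1l n m y : D n y -> D n.+1 (j1 m * y).
Proof.
apply: (span_map (phi := fun y => j1 m * y)) => [x z|_ [r [ms ->]]]; first by rewrite mulrBr.
pose ms' (i : 'I_n.+1) := if unlift ord0 i is Some l then ms l else ract m r.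
have -> : j1 m * (j0 r * \prod_(i < n) j1 (ms i)) = j0 1 * \prod_(i < n.+1) j1 (ms' i).
  rewrite j0_1 mul1r big_ord_recl /ms' unlift_none j1_ract -mulrA; congr (_ * (_ * _)).
  by apply: eq_bigr => i _; rewrite liftK.
exact: Deg_gen.
Qed.

Lemma Deg_mul a b x y : D a x -> D b y -> D (a + b) (x * y).
Proof.
move=> + hy; apply: (span_map (phi := fun x => x * y)) => [u v|_ [r [ms ->]]].
  by rewrite mulrBl.
rewrite -mulrA; apply: Deg_j0l; elim: a ms => [|a IH] ms; first by rewrite big_ord0 mul1r.
by rewrite big_ord_recl -mulrA addSn; apply: Deg_j1l.
Qed.

Lemma Deg1 : D 0 1.
Proof. by have := Deg_gen 1 (fun _ : 'I_0 => 0); rewrite big_ord0 j0_1 mulr1. Qed.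

Lemma Deg_j1 m : D 1 (j1 m).
Proof. by rewrite -[j1 m]mulr1; apply/Deg_j1l/Deg1. Qed.

Lemma Deg_exp k x : D 1 x -> D k (x ^+ k).
Proof.
move=> hx; elim: k => [|k IH]; first exact: Deg1.
by rewrite exprS -add1n; apply: Deg_mul.
Qed.

Lemma InS_one : S one.
Proof. by split=> // -[|n]; [exact: Deg1 | exact: span0]. Qed.

Lemma InS_mul f g : S f -> S g -> S (mulS f g).
Proof.
move=> [f0 fD] [g0 gD]; split=> [|n]; first by rewrite mulS0 f0 g0 mulr1.
apply: span_sum => i; have /subnKC ni : (i <= n)%N by rewrite -ltnS ltn_ord.
by have := Deg_mul (fD i) (gD (n - i)%N); rewrite ni.
Qed.

Lemma InS_invS f : S f -> S (invS f).
Proof.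
move=> [f0 fD]; split=> // n; elim: n {-2}n (leqnn n) => [|n IH] [|k] kn //; try exact: Deg1.
rewrite invSS; apply/span_opp/span_sum => l.
have lk : (l <= k)%N by rewrite -ltnS ltn_ord.
have e : (l.+1 + (k - l))%N = k.+1 by lia.
by have := Deg_mul (fD l.+1) (IH (k - l)%N _); rewrite e; apply; lia.
Qed.

Lemma InS_agree1 f : S f -> agree 1 f one.
Proof. by move=> [f0 _] [|k]. Qed.

Lemma InS_one_minus n a : (0 < n)%N -> D n a -> S (one_minus n a).
Proof.
move=> n_gt0 ha; split=> // k; rewrite /one_minus.
by case: eqP => [->|_]; [exact: Deg1 | case: eqP => [->|_]; [exact: span_opp | exact: span0]].
Qed.

Lemma tlogM f g n : S f -> S g -> (0 < n)%N ->
  C n (tlog (mulS f g) n - (tlog f n + tlog g n)).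
Proof. by case: tlogP => _ + _ _; apply. Qed.

Lemma tlogMl f g n : S f -> S g -> (0 < n)%N -> C n (tlog g n) ->
  C n (tlog (mulS f g) n - tlog f n).
Proof. by move=> Sf Sg n_gt0 /(span_add (tlogM Sf Sg n_gt0)); rewrite opprD addrA subrK. Qed.

Lemma tlogMr f g n : S f -> S g -> (0 < n)%N -> C n (tlog f n) ->
  C n (tlog (mulS f g) n - tlog g n).
Proof. by move=> Sf Sg n_gt0 /(span_add (tlogM Sf Sg n_gt0)); rewrite opprD addrA addrAC subrK. Qed.

Lemma tlogM0 f g n : S f -> S g -> (0 < n)%N -> C n (tlog f n) -> C n (tlog g n) ->
  C n (tlog (mulS f g) n).
Proof. by move=> Sf Sg n_gt0 hf /(tlogMl Sf Sg n_gt0) /(span_add hf); rewrite addrC subrK. Qed.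

Lemma tlog1 n : (0 < n)%N -> C n (tlog one n).
Proof.
move=> n_gt0; have /span_opp := tlogM InS_one InS_one n_gt0.
by rewrite mul1S opprB addrK.
Qed.

Lemma tlogV f g n : S f -> S g -> (0 < n)%N -> mulS f g = one ->
  C n (tlog f n + tlog g n).
Proof.
move=> Sf Sg n_gt0 fg; apply: span_subr_cancel (tlog1 n_gt0) _.
by rewrite -fg; apply: tlogM.
Qed.

Lemma tlogV0 f g n : S f -> S g -> (0 < n)%N -> mulS f g = one ->
  C n (tlog f n) -> C n (tlog g n).
Proof.
move=> Sf Sg n_gt0 fg hf; apply: span_subr_cancel (tlogV Sf Sg n_gt0 fg) _.
by rewrite addrK.
Qed.

Lemma tlogM_congr f g a b n : S f -> S g -> (0 < n)%N ->
  C n (tlog f n - a) -> C n (tlog g n - b) -> C n (tlog (mulS f g) n - (a + b)).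
Proof.
by move=> Sf Sg n_gt0 hf hg; apply: span_subr_trans (tlogM Sf Sg n_gt0) (span_subrD hf hg).
Qed.

Lemma tlog_one_minus1 a k : (0 < k)%N -> D 1 a -> C k (tlog (one_minus 1 a) k - a ^+ k).
Proof.
move=> k_gt0 ha; case: tlogP => _ _ _ /(_ 1%N a k isT ha k_gt0); rewrite dvd1n divn1.
move=> [ys [/(_ 0%N isT) /= h0 hy]]; rewrite muln1 in h0 hy; rewrite big_ord1 in hy.
by have := span_add hy h0; rewrite addrA subrK.
Qed.

Lemma Comm_exp_rot n r m : (0 < n)%N -> C n ((j0 r * j1 m) ^+ n - (j1 m * j0 r) ^+ n).
Proof.
case: n => [//|k] _.
have -> : (j1 m * j0 r) ^+ k.+1 = (j1 m * j0 r) ^+ k * j1 m * j0 r.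
  by rewrite exprSr !mulrA.
rewrite exprS_mul_rot; apply: spanG; exists r, ((j1 m * j0 r) ^+ k * j1 m); split => //.
by rewrite -addn1; apply: Deg_mul; [rewrite -j1_ract; apply/Deg_exp/Deg_j1 | apply: Deg_j1].
Qed.

Definition ghost_null f := forall n, (0 < n)%N -> C n (tlog f n).

Lemma ghost_null_commutator x x' y y' : S x -> S x' -> S y -> S y' ->
  mulS x x' = one -> mulS y y' = one -> ghost_null (mulS (mulS (mulS x y) x') y').
Proof.
move=> Sx Sx' Sy Sy' xx' yy' n n_gt0.
have Sxy := InS_mul Sx Sy; have Sxyx := InS_mul Sxy Sx'.
have h := tlogM_congr Sxyx Sy' n_gt0 (tlogM_congr Sxy Sx' n_gt0 (tlogM Sx Sy n_gt0)
  (span_subrr _ _)) (span_subrr _ _).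
apply: span_subr_cancel (span_add (tlogV Sx Sx' n_gt0 xx') (tlogV Sy Sy' n_gt0 yy')) _.
by rewrite addrACA addrA -opprB; apply: span_opp h.
Qed.

Lemma ghost_null_gen r m u : S u ->
  mulS u (one_minus 1 (j1 (ract m r))) = one ->
  ghost_null (mulS (one_minus 1 (j1 (lact r m))) u).
Proof.
move=> Su ub n n_gt0; set a := j1 (lact r m); set b := j1 (ract m r).
have Sa : S (one_minus 1 a) by apply/InS_one_minus/Deg_j1.
have Sb : S (one_minus 1 b) by apply/InS_one_minus/Deg_j1.
have hu : C n (tlog u n - - b ^+ n).
  apply: span_subr_cancel (tlogV Su Sb n_gt0 ub) _.
  by rewrite opprK opprD addrACA subrr add0r; apply/tlog_one_minus1/Deg_j1.
have := tlogM_congr Sa Su n_gt0 (tlog_one_minus1 n_gt0 (Deg_j1 _)) hu.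
rewrite /a /b j1_lact j1_ract => h.
by apply: span_subr_cancel (Comm_exp_rot r m n_gt0) _; rewrite -opprB; apply: span_opp h.
Qed.

Lemma NG_InS f : NG f -> S f.
Proof.
elim=> {f}.
- by [].
- exact: InS_one.
- by move=> f g _ Sf fg; rewrite -(functional_extensionality _ _ fg).
- by move=> f g _ Sf _ Sg; apply: InS_mul.
- by [].
- by move=> f g h _ Sf Sg Sh _; apply: InS_mul => //; apply: InS_mul.
Qed.

Lemma ghost_null_NG f : NG f -> ghost_null f.
Proof.
elim=> {f}.
- move=> f _ [[x [x' [y [y' [Sx' [Sy' [Sx Sy xx' yy' ef]]]]]]] | [r [m [u [Su ub ef]]]]].
    rewrite (functional_extensionality _ _ ef).
    by apply: ghost_null_commutator => //; apply: functional_extensionality.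
  rewrite (functional_extensionality _ _ ef).
  by apply: ghost_null_gen => //; apply: functional_extensionality.
- exact: tlog1.
- by move=> f g _ IH /functional_extensionality <-.
- move=> f g /NG_InS Sf IHf /NG_InS Sg IHg n n_gt0.
  by apply: tlogM0 => //; [apply: IHf | apply: IHg].
- move=> f g /NG_InS Sf IH Sg /functional_extensionality fg n n_gt0.
  by apply: tlogV0 Sf Sg n_gt0 fg (IH n n_gt0).
- move=> f g h /NG_InS Sf IH Sg Sh /functional_extensionality gh n n_gt0.
  apply: span_subr_cancel (tlogV Sg Sh n_gt0 gh) _.
  have := tlogM_congr (InS_mul Sg Sf) Sh n_gt0 (tlogMl Sg Sf n_gt0 (IH n n_gt0)) (span_subrr _ _).
  by rewrite -opprB => /span_opp.
Qed.

Lemma tlog_continuous m : exists N, forall f, S f -> agree N f one ->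
  forall k, (0 < k < m)%N -> C k (tlog f k).
Proof.
case: tlogP => _ _ /(_ m) [N HN] _; exists N => f Sf f1 k km.
by apply: HN => // l /andP [l_gt0 lN]; rewrite f1 // /oneS gtn_eqF.
Qed.

Lemma ghost_null_WClos c : WClos j0 j1 lact ract c -> ghost_null c.
Proof.
move=> [Sc Wc] n n_gt0; have [N HN] := tlog_continuous n.+1.
have [g [Ng gc]] := Wc N; have Sg := NG_InS Ng; have [g0 _] := Sg.
have Sh := InS_mul (InS_invS Sg) Sc.
rewrite -(mulVKS c g0); apply: (tlogM0 Sg Sh n_gt0); first exact: ghost_null_NG.
by apply: (HN _ Sh (agree_invS_mul g0 (agree_sym gc))); rewrite n_gt0 ltnSn.
Qed.

Lemma NG_WClos g : NG g -> WClos j0 j1 lact ract g.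
Proof. by move=> Ng; split=> [|n]; [exact: NG_InS | exists g]. Qed.

Definition leading_NG n a := exists2 e, NG e & agree n.+1 e (one_minus n a).

Lemma leading_NG0 n : leading_NG n 0.
Proof. by exists one; [apply: ng_one | rewrite one_minus0]. Qed.

Lemma leading_NGB n a b :
  leading_NG n a -> leading_NG n b -> leading_NG n (a - b).
Proof.
move=> [e Ne ea] [e' Ne' e'b]; have Se' := NG_InS Ne'; have [e'0 _] := Se'.
exists (mulS e (invS e')).
  by apply/ng_mul/(ng_inv Ne' (InS_invS Se')) => // k; rewrite mulS_invS.
apply: agree_trans (agree_mulS ea (agree_invS e'0 _ e'b)) _ => //.
exact: agree_trans (agree_mul2l _ (invS_one_minus b)) (one_minusD _ _).
Qed.

Lemma leading_NGN n a : leading_NG n a -> leading_NG n (- a).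
Proof. by move=> ha; rewrite -sub0r; apply: leading_NGB => //; apply: leading_NG0. Qed.

Lemma leading_NGD n a b :
  leading_NG n a -> leading_NG n b -> leading_NG n (a + b).
Proof. by move=> ha hb; rewrite -[b]opprK; apply/leading_NGB/leading_NGN. Qed.

Lemma leading_NG_commutator i j x y : (0 < i)%N -> (0 < j)%N -> D i x -> D j y ->
  leading_NG (i + j) (y * x - x * y).
Proof.
move=> i_gt0 j_gt0 Dx Dy; set a := one_minus i x; set b := one_minus j y.
have Sa : S a by apply: InS_one_minus.
have Sb : S b by apply: InS_one_minus.
set Q := mulS b a; have SQ : S Q by apply: InS_mul.
have [Q0 _] := SQ.
have invQ : invS Q = mulS (invS a) (invS b).
  apply/esym/invS_unique => //.
  by rewrite /Q mulSA -(mulSA a) mulS_invS // mul1S mulS_invS.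
exists (mulS (mulS (invS Q) (mulS (mulS (mulS a b) (invS a)) (invS b))) Q).
  apply: ng_conj; rewrite ?invS_mulS //; last exact: InS_invS.
  apply: ng_gen; first exact/(InS_mul _ (InS_invS Sb))/(InS_mul _ (InS_invS Sa))/InS_mul.
  left; exists a, (invS a), b, (invS b).
  by split; [exact: InS_invS | split; [exact: InS_invS | split => // k; rewrite mulS_invS]].
have cQ : mulS (mulS (mulS (mulS a b) (invS a)) (invS b)) Q = mulS a b.
  by rewrite mulSA (mulSA (mulS a b)) -(mulSA (invS a)) -invQ invS_mulS // mulS1.
rewrite mulSA cQ.
apply: agree_trans (agree_mul2l _ (one_minus_commute x y i_gt0 j_gt0)) _.
by rewrite -mulSA invS_mulS // mul1S.
Qed.

Lemma leading_NG_gen r m : leading_NG 1 (j1 (lact r m) - j1 (ract m r)).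
Proof.
have Sa : S (one_minus 1 (j1 (lact r m))) by apply/InS_one_minus/Deg_j1.
have Sb : S (one_minus 1 (j1 (ract m r))) by apply/InS_one_minus/Deg_j1.
exists (mulS (one_minus 1 (j1 (lact r m))) (invS (one_minus 1 (j1 (ract m r))))).
  apply: ng_gen; first exact/InS_mul/InS_invS.
  by right; exists r, m, (invS (one_minus 1 (j1 (ract m r)))); split=> // [|k];
    [exact: InS_invS | rewrite invS_mulS].
exact: agree_trans (agree_mul2l _ (invS_one_minus _)) (one_minusD _ _).
Qed.

Lemma leading_NG_Comm_gen n r x : (0 < n)%N -> D n x -> leading_NG n (j0 r * x - x * j0 r).
Proof.
move=> n_gt0; elim=> [|_ [r' [ms ->]]|x' y _ hx _ hy].
- by rewrite mulr0 mul0r subrr; apply: leading_NG0.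
- case: n n_gt0 ms => [//|[|k]] _ ms.
    rewrite big_ord1 -!j1_lact -j1_ract; exact: leading_NG_gen.
  rewrite big_ord_recl; set w := \prod_(i < k.+1) _.
  have Dw : D k.+1 w by rewrite -[w]mul1r -j0_1; apply: Deg_gen.
  have Dm : D 1 (j0 r' * j1 (ms ord0)) by apply/Deg_j0l/Deg_j1.
  have h1 := leading_NG_commutator (i := k.+1) (j := 1) isT isT Dw (Deg_j0l r Dm).
  have h2 := leading_NG_commutator (i := k.+1) (j := 1) isT isT (Deg_j0r r Dw) Dm.
  rewrite addn1 in h1 h2; have := leading_NGB h1 h2.
  by rewrite !mulrA opprB addrA subrK.
- have -> : j0 r * (x' - y) - (x' - y) * j0 r =
    (j0 r * x' - x' * j0 r) - (j0 r * y - y * j0 r).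
    by rewrite mulrBr mulrBl !opprD !opprK addrACA.
  exact: leading_NGB.
Qed.

Lemma leading_NG_Comm n y : (0 < n)%N -> C n y -> leading_NG n y.
Proof.
move=> n_gt0; elim=> [|_ [r [x [Dx ->]]]|x z _ hx _ hz].
- exact: leading_NG0.
- exact: leading_NG_Comm_gen.
- exact: leading_NGB.
Qed.

Lemma leading_NG_rot n m w : (0 < n)%N -> D n.-1 w -> leading_NG n (j1 m * w - w * j1 m).
Proof.
case: n => [//|[|k]] _ /=; last first.
  move=> Dw; rewrite -opprB; apply: leading_NGN.
  exact: (leading_NG_commutator (i := 1) (j := k.+1) isT isT (Deg_j1 m) Dw).
elim=> [|_ [r [ms ->]]|x z _ hx _ hz].
- by rewrite mulr0 mul0r subrr; apply: leading_NG0.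
- rewrite big_ord0 mulr1 -j1_lact -j1_ract -opprB; exact/leading_NGN/leading_NG_gen.
- have -> : j1 m * (x - z) - (x - z) * j1 m = (j1 m * x - x * j1 m) - (j1 m * z - z * j1 m).
    by rewrite mulrBr mulrBl !opprD !opprK addrACA.
  exact: leading_NGB.
Qed.

Lemma leading_NG_CycSub n a : (0 < n)%N -> CycSub j0 j1 n a -> leading_NG n a.
Proof.
move=> n_gt0; elim=> [|_ [/(leading_NG_Comm n_gt0) //|[x [z [_ [[s [Ds -> Cz]] ->]]]]]|x y _ hx _ hy].
- exact: leading_NG0.
- have -> : \sum_(p <- s) j1 p.1 * p.2 - z = \sum_(p <- s) (j1 p.1 * p.2 - p.2 * j1 p.1) -
      (z - \sum_(p <- s) p.2 * j1 p.1) by rewrite sumrB opprB addrA subrK.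
  apply: leading_NGB; last exact: leading_NG_Comm.
  elim: s Ds {Cz} => [|p s IH] Ds; first by rewrite big_nil; apply: leading_NG0.
  rewrite big_cons; apply: leading_NGD; first by apply/leading_NG_rot/Ds/mem_head.
  by apply: IH => q sq; apply/Ds; rewrite inE sq orbT.
- exact: leading_NGB.
Qed.

Lemma tlog_one_minus_ndvd j a n : (0 < j)%N -> D j a -> (0 < n)%N -> ~~ (j %| n)%N ->
  C n (tlog (one_minus j a) n).
Proof.
move=> j_gt0 Da n_gt0 /negbTE jn.
by case: tlogP => _ _ _ /(_ j a n j_gt0 Da n_gt0); rewrite jn.
Qed.

Lemma peel_leading j h : (0 < j)%N -> S h -> agree j h one ->
  let e := one_minus j (- h j) in [/\ S e, S (mulS (invS e) h) & agree j.+1 (mulS (invS e) h) one].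
Proof.
move=> j_gt0 [h0 Dh] h1 e; have Se : S e by apply/InS_one_minus/span_opp/Dh.
split=> //; first exact/InS_mul/(conj h0 Dh)/InS_invS.
exact/agree_invS_mul/one_minus_lead.
Qed.

Lemma tlog_agree_one n h : (0 < n)%N -> S h -> agree n.+1 h one -> C n (tlog h n).
Proof.
move=> n_gt0 Sh h1; have [N HN] := tlog_continuous n.+1.
suff: forall d j h, (N <= j + d)%N -> (n < j)%N -> S h -> agree j h one -> C n (tlog h n).
  by move/(_ N n.+1 h); apply; rewrite ?leq_addl.
elim=> [|d IH] j {Sh h1}h Nj nj Sh h1.
  by rewrite addn0 in Nj; apply: (HN h Sh (agree_le Nj h1)); rewrite n_gt0 ltnSn.
have j_gt0 : (0 < j)%N by apply: leq_ltn_trans nj.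
have [Se Sh' h1'] := peel_leading j_gt0 Sh h1; have [e0 _] := Se.
rewrite -(mulVKS h e0); apply: (tlogM0 Se Sh' n_gt0).
  apply: tlog_one_minus_ndvd => //; first by case: Sh => _ Dh; apply/span_opp/Dh.
  by apply/negP => /(dvdn_leq n_gt0); rewrite leqNgt nj.
by apply: IH h1' => //; [rewrite addSnnS | apply: ltnW].
Qed.

Lemma tlog_WClos_mulr f c n : S f -> WClos j0 j1 lact ract c -> (0 < n)%N ->
  C n (tlog (mulS f c) n - tlog f n).
Proof. by move=> Sf [Sc Wc] n_gt0; apply: tlogMl => //; apply: ghost_null_WClos. Qed.

Lemma ghost_continuous f0 m : S f0 -> exists n, forall f c,
  S f -> WClos j0 j1 lact ract c -> agree n f (mulS f0 c) ->
  forall k, (0 < k < m)%N -> C k (tlog f k - tlog f0 k).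
Proof.
move=> Sf0; have [N HN] := tlog_continuous m; exists N => f c Sf Wc ff0c k /andP [k_gt0 km].
have Sc : S c by case: Wc.
have Sf0c := InS_mul Sf0 Sc; have [f0c0 _] := Sf0c.
have Sh := InS_mul (InS_invS Sf0c) Sf.
rewrite -(mulVKS f f0c0); apply: span_subr_trans (tlog_WClos_mulr Sf0 Wc k_gt0).
apply: (tlogMl Sf0c Sh k_gt0); apply: HN => //; last by rewrite k_gt0.
exact/agree_invS_mul/agree_sym.
Qed.

Section NormInjective.
Hypothesis norm_inj : forall n, (0 < n)%N -> norm_injective j0 j1 n.

Lemma NG_approx_step n h : (0 < n)%N -> S h -> agree n h one -> C n (tlog h n) ->
  exists2 e, NG e & agree n.+1 e h.
Proof.
move=> n_gt0 Sh h1 Ch; have [Se Sh' h1'] := peel_leading n_gt0 Sh h1.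
set a := - h n in Se Sh' h1' *; have [e0 _] := Se.
have Da : D n a by case: Sh => _ Dh; apply/span_opp/Dh.
have Ce : C n (tlog (one_minus n a) n).
  apply: span_subr_cancel Ch _; rewrite -{1}(mulVKS h e0).
  exact: (tlogMl Se Sh' n_gt0 (tlog_agree_one n_gt0 Sh' h1')).
case: tlogP => _ _ _ /(_ n a n n_gt0 Da n_gt0); rewrite dvdnn divnn n_gt0.
move=> [ys [hys hy]]; rewrite mul1n in hys hy.
have rot_a : forall i, (i < n)%N -> RotIter j0 j1 n i a (ys i) by move=> i /hys; rewrite expr1.
have [e Ne ea] := leading_NG_CycSub n_gt0 (norm_inj n_gt0 Da rot_a (span_subr_cancel Ce hy)).
by exists e => //; apply: agree_trans ea (one_minus_lead n_gt0 h1).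
Qed.

Lemma NG_approx d n h : (0 < n)%N -> S h -> agree n h one ->
  (forall k, (0 < k < n + d)%N -> C k (tlog h k)) -> exists2 g, NG g & agree (n + d) h g.
Proof.
elim: d n h => [|d IH] n h n_gt0 Sh h1 Ch; first by exists one; [apply: ng_one | rewrite addn0].
have [e Ne eh] : exists2 e, NG e & agree n.+1 e h.
  by apply: NG_approx_step => //; apply: Ch; rewrite n_gt0 addnS ltnS leq_addr.
have Se := NG_InS Ne; have [e0 _] := Se; have Sh' := InS_mul (InS_invS Se) Sh.
have Ch' : forall k, (0 < k < n.+1 + d)%N -> C k (tlog (mulS (invS e) h) k).
  move=> k /andP [k_gt0 kn]; apply: span_subr_cancel (Ch k _) _; first by rewrite k_gt0 -addSnnS.
  by have := tlogMr Se Sh' k_gt0 (ghost_null_NG Ne k_gt0); rewrite mulVKS.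
have [g Ng h'g] := IH n.+1 _ isT Sh' (agree_invS_mul e0 eh) Ch'.
exists (mulS e g); first exact: ng_mul.
by rewrite -(mulVKS h e0) addnS -addSn; apply: agree_mulS.
Qed.

Lemma tlog_invS_mul f g n : S f -> S g -> (0 < n)%N ->
  C n (tlog f n - tlog g n) -> C n (tlog (mulS (invS g) f) n).
Proof.
move=> Sf Sg n_gt0 Cfg; have [g0 _] := Sg; have Sh := InS_mul (InS_invS Sg) Sf.
apply: span_subr_cancel Cfg _; rewrite -addrA -opprD -{1}(mulVKS f g0).
exact: tlogM.
Qed.

Lemma WClos_ghost_null h : S h -> ghost_null h -> WClos j0 j1 lact ract h.
Proof.
move=> Sh Ch; split=> // N.
have [g Ng hg] := NG_approx (d := N) (n := 1) isT Sh (InS_agree1 Sh) (fun k hk => Ch k (andP hk).1).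
by exists g; split=> // k kN; apply: hg; rewrite add1n ltnS ltnW.
Qed.

Lemma ghost_injective f g : S f -> S g ->
  (forall n, (0 < n)%N -> C n (tlog f n - tlog g n)) ->
  exists c, WClos j0 j1 lact ract c /\ forall n, f n = mulS g c n.
Proof.
move=> Sf Sg Cfg; have [g0 _] := Sg.
exists (mulS (invS g) f); split; last by move=> n; rewrite mulVKS.
apply: WClos_ghost_null; first exact/InS_mul/Sf/InS_invS.
by move=> n n_gt0; apply: tlog_invS_mul (Cfg n n_gt0).
Qed.

Lemma ghost_inverse_continuous f0 n : S f0 -> exists m, forall f, S f ->
  (forall k, (0 < k < m)%N -> C k (tlog f k - tlog f0 k)) ->
  exists c, WClos j0 j1 lact ract c /\ forall k, (k < n)%N -> f k = mulS f0 c k.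
Proof.
move=> Sf0; exists n.+1 => f Sf Cff0; have [f00 _] := Sf0.
have Sh := InS_mul (InS_invS Sf0) Sf.
have [c Nc hc] := NG_approx (d := n) (n := 1) isT Sh (InS_agree1 Sh)
  (fun k kn => tlog_invS_mul Sf Sf0 (andP kn).1 (Cff0 k kn)).
exists c; split; first exact: NG_WClos.
move=> k kn; rewrite -{1}(mulVKS f f00).
by apply: (agree_mul2l _ (agree_le (leq_addl 1 n) hc)) kn.
Qed.

End NormInjective.

End Ghost.

Unset Implicit Arguments.
Set Strict Implicit.

Theorem mainTheorem4 (R : pzRingType) (M : zmodType)
    (lact : R -> M -> M) (ract : M -> R -> M)
    (T : pzRingType) (j0 : R -> T) (j1 : M -> T)
    (tlog : (nat -> T) -> nat -> T) :
  bimodule_axioms lact ract ->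
  tensor_algebra lact ract j0 j1 ->
  is_tlog j0 j1 tlog ->
  (forall f c, InS j0 j1 f -> WClos j0 j1 lact ract c ->
     forall n, (0 < n)%N ->
       Comm j0 j1 n (tlog (mulS f c) n - tlog f n)) /\
  (forall f0 m, InS j0 j1 f0 -> exists n, forall f c,
     InS j0 j1 f -> WClos j0 j1 lact ract c ->
     (forall k, (k < n)%N -> f k = mulS f0 c k) ->
     forall k, (0 < k < m)%N -> Comm j0 j1 k (tlog f k - tlog f0 k)) /\
  ((forall n, (0 < n)%N -> norm_injective j0 j1 n) ->
   (forall f g, InS j0 j1 f -> InS j0 j1 g ->
      (forall n, (0 < n)%N -> Comm j0 j1 n (tlog f n - tlog g n)) ->
      exists c, WClos j0 j1 lact ract c /\ forall n, f n = mulS g c n) /\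
   (forall f0 n, InS j0 j1 f0 -> exists m, forall f, InS j0 j1 f ->
      (forall k, (0 < k < m)%N -> Comm j0 j1 k (tlog f k - tlog f0 k)) ->
      exists c, WClos j0 j1 lact ract c /\
        forall k, (k < n)%N -> f k = mulS f0 c k)).
Proof.
move=> _ [[j0_1 j0_hom] _ j1_lact j1_ract _] tlogP.
have j0_mul r s : j0 (r * s) = j0 r * j0 s by case: (j0_hom r s).
split; [|split].
- by move=> f c Sf Wc n; apply: (tlog_WClos_mulr j0_1 j0_mul j1_lact j1_ract tlogP).
- by move=> f0 m; apply: (ghost_continuous j0_1 j0_mul j1_lact j1_ract tlogP).
- move=> norm_inj; split.
  + by move=> f g; apply: (ghost_injective j0_1 j0_mul j1_lact j1_ract tlogP norm_inj).
  + by move=> f0 n; apply: (ghost_inverse_continuous j0_1 j0_mul j1_lact j1_ract tlogP norm_inj).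
Qed.
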